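(* Let $\phi=\langle X,Q,D,C\rangle$ be a QCSP with $C=\{c_1,\dots,c_m\}$, and for each $k\in\{1,\dots,m\}$ let $\phi_k=\langle X,Q,D,\{c_k\}\rangle$. Then for all $x_i\in X$, $V\subseteq X$ and $a,b\in D_{x_i}$: $\bigl(\bigvee_{k}\textsl{inconsistent}^{\phi_k}(x_i,a)\bigr)\rightarrow\textsl{inconsistent}^\phi(x_i,a)$; $\bigl(\bigvee_{k}\textsl{implied}^{\phi_k}(x_i,a)\bigr)\rightarrow\textsl{implied}^\phi(x_i,a)$; $\bigl(\bigwedge_{k}\textsl{d-fixable}^{\phi_k}(x_i,a)\bigr)\rightarrow\textsl{d-fixable}^\phi(x_i,a)$; $\bigl(\bigwedge_{k}\textsl{d-substitutable}^{\phi_k}(x_i,a,b)\bigr)\rightarrow\textsl{d-substitutable}^\phi(x_i,a,b)$; $\bigl(\bigwedge_{k}\textsl{d-interchangeable}^{\phi_k}(x_i,a,b)\bigr)\rightarrow\textsl{d-interchangeable}^\phi(x_i,a,b)$; $\bigl(\bigvee_{k}\textsl{determined}^{\phi_k}(x_i)\bigr)\rightarrow\textsl{determined}^\phi(x_i)$; $\bigl(\bigwedge_{k}\textsl{d-irrelevant}^{\phi_k}(x_i)\bigr)\rightarrow\textsl{d-irrelevant}^\phi(x_i)$; $\bigl(\bigvee_{k}\textsl{dependent}^{\phi_k}(V,x_i)\bigr)\rightarrow\textsl{dependent}^\phi(V,x_i)$.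
   Context: Fix a finite set $\mathbb{D}$. For a finite set $V$ of variables, a $V$-tuple is a map $t:V\to\mathbb{D}$, written $x\mapsto t_x$; a $V$-relation is a set of $V$-tuples. A QCSP is a tuple $\phi=\langle X,Q,D,C\rangle$ where $X=\{x_1,\dots,x_n\}$ is a finite set of variables linearly ordered by index, $Q$ assigns to each $x_i$ a quantifier $Q_{x_i}\in\{\forall,\exists\}$, $D$ assigns to each $x_i$ a domain $D_{x_i}\subseteq\mathbb{D}$, and $C$ is a finite set of constraints, each being a $V$-relation for some $V\subseteq X$. For $V\subseteq X$, $\prod_{x\in V}D_x$ denotes the set of $V$-tuples $t$ with $t_x\in D_x$ for all $x\in V$. For an $X$-tuple $t$, $x\in X$, $a\in\mathbb{D}$, $t[x:=a]$ is the tuple equal to $t$ except that its value at $x$ is $a$; $t|_U$ is the restriction to $U$. Let $E=\{x_i:Q_{x_i}=\exists\}$, $A=\{x_i:Q_{x_i}=\forall\}$, $A_j=\{x_i\in A:i\le j\}$. $\mathrm{sol}^\phi$ is the set of $t\in\prod_{x\in X}D_x$ with $t|_V\in c$ for every $V$-relation $c\in C$. A strategy is a family $s=(s_{x_i})_{x_i\in E}$ of functions $s_{x_i}:\prod_{y\in A_{i-1}}D_y\to D_{x_i}$; its scenarios $\mathrm{sce}^\phi(s)$ are the $t\in\prod_{x\in X}D_x$ with $t_{x_i}=s_{x_i}(t|_{A_{i-1}})$ for all $x_i\in E$; $s$ is winning if $\mathrm{sce}^\phi(s)\subseteq\mathrm{sol}^\phi$; $\mathrm{out}^\phi=\bigcup_{s\text{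 winning}}\mathrm{sce}^\phi(s)$. Deep properties, for a QCSP $\psi$ and $\mathrm{out}=\mathrm{out}^\psi$: $\textsl{inconsistent}^\psi(x_i,a)$ iff $\forall t\in\mathrm{out}.\ t_{x_i}\ne a$; $\textsl{implied}^\psi(x_i,a)$ iff $\forall t\in\mathrm{out}.\ t_{x_i}=a$; $\textsl{d-fixable}^\psi(x_i,a)$ iff $\forall t\in\mathrm{out}.\ t[x_i:=a]\in\mathrm{out}$; $\textsl{d-substitutable}^\psi(x_i,a,b)$ iff $\forall t\in\mathrm{out}.\ (t_{x_i}=a)\rightarrow t[x_i:=b]\in\mathrm{out}$; $\textsl{d-interchangeable}^\psi(x_i,a,b)$ iff $\textsl{d-substitutable}^\psi(x_i,a,b)\wedge\textsl{d-substitutable}^\psi(x_i,b,a)$; $\textsl{determined}^\psi(x_i)$ iff $\forall t\in\mathrm{out}.\ \forall b\in D_{x_i}\setminus\{t_{x_i}\}.\ t[x_i:=b]\notin\mathrm{out}$; $\textsl{d-irrelevant}^\psi(x_i)$ iff $\forall t\in\mathrm{out}.\ \forall b\in D_{x_i}.\ t[x_i:=b]\in\mathrm{out}$; $\textsl{dependent}^\psi(V,x_i)$ iff $\forall t,t'\in\mathrm{out}.\ (t|_V=t'|_V)\rightarrow t_{x_i}=t'_{x_i}$. *)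

From mathcomp Require Import all_boot.
From Stdlib Require List.
Set Implicit Arguments. Unset Strict Implicit. Unset Printing Implicit Defensive.

(* The finite universe of values 𝔻 is a finType T.  Variables x_1..x_n are
   the ordinals 'I_n (0-based, with the linear order by index).
   An X-tuple is a function 'I_n -> T; a V-tuple (V : {set 'I_n}) is a
   function {y | y \in V} -> T; a V-relation is a set (Prop predicate) of
   V-tuples. *)

Inductive quant := QForall | QExists.

Definition is_forall (q : quant) : bool := if q is QForall then true else false.

Record constraint (n : nat) (T : Type) := Constraint {
  scope : {set 'I_n};
  rel : ({y : 'I_n | y \in scope} -> T) -> Prop }.

Section QCSP.
Variables (T : finType) (n : nat) (Q : 'I_n -> quant) (D : 'I_n -> {set T})
          (C : seq (constraint n T)).

Definition restr (V : {set 'I_n}) (t : 'I_n -> T) : {y : 'I_n | y \in V} -> T :=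
  fun y => t (val y).

Definition upd (t : 'I_n -> T) (x : 'I_n) (a : T) : 'I_n -> T :=
  fun j => if j == x then a else t j.

Definition in_dom (t : 'I_n -> T) : Prop := forall i, t i \in D i.

Definition sol (t : 'I_n -> T) : Prop :=
  in_dom t /\ forall c, List.In c C -> @rel n T c (@restr (@scope n T c) t).

Definition Abefore (i : 'I_n) : {set 'I_n} :=
  [set y : 'I_n | is_forall (Q y) && (y < i)].

Definition strategy :=
  forall i : 'I_n, Q i = QExists -> ({y : 'I_n | y \in Abefore i} -> T) -> T.

Definition valid_strategy (s : strategy) : Prop :=
  forall i (h : Q i = QExists) (u : {y : 'I_n | y \in Abefore i} -> T),
    (forall y, u y \in D (val y)) -> s i h u \in D i.

Definition sce (s : strategy) (t : 'I_n -> T) : Prop :=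
  in_dom t /\ forall i (h : Q i = QExists), t i = s i h (@restr (Abefore i) t).

Definition winning (s : strategy) : Prop := forall t, sce s t -> sol t.

Definition out (t : 'I_n -> T) : Prop :=
  exists s : strategy, valid_strategy s /\ winning s /\ sce s t.

Definition inconsistent (x : 'I_n) (a : T) : Prop :=
  forall t, out t -> t x <> a.
Definition implied (x : 'I_n) (a : T) : Prop :=
  forall t, out t -> t x = a.
Definition d_fixable (x : 'I_n) (a : T) : Prop :=
  forall t, out t -> out (upd t x a).
Definition d_substitutable (x : 'I_n) (a b : T) : Prop :=
  forall t, out t -> t x = a -> out (upd t x b).
Definition d_interchangeable (x : 'I_n) (a b : T) : Prop :=
  d_substitutable x a b /\ d_substitutable x b a.
Definition determined (x : 'I_n) : Prop :=
  forall t, out t -> forall b, b \in D x -> b <> t x -> ~ out (upd t x b).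
Definition d_irrelevant (x : 'I_n) : Prop :=
  forall t, out t -> forall b, b \in D x -> out (upd t x b).
Definition dependent (V : {set 'I_n}) (x : 'I_n) : Prop :=
  forall t t', out t -> out t' -> (forall y, y \in V -> t y = t' y) -> t x = t' x.

End QCSP.

From mathcomp Require Import all_boot.
From Stdlib Require List.
From Stdlib Require Import FunctionalExtensionality ProofIrrelevance.

(* The "disjunctive" properties (inconsistent, implied, determined, dependent)
   are universal statements over out^psi, so they transfer to phi as soon as
   out^phi is included in out^{phi_k}; this holds because a strategy winning
   for all of C is in particular winning for c_k ([out_sub]).

   The "conjunctive" properties (d-fixable, d-substitutable, d-interchangeable,
   d-irrelevant) all say that out^psi is closed under replacing the value of
   x by b whenever the current value satisfies a predicate P ([upd_closed]).
   The heart of the proof is a strategy repair lemma ([repair]): if s is a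
   winning strategy with scenario t, P (t x) holds, and every scenario v of s
   with P (v x) stays a solution after setting x to b, then [upd t x b] is an
   outcome.  The repaired strategy either treats the history "x = b" as the
   history "x = t x" (x universal, [redirect]) or plays b at x whenever s
   would play a value satisfying P (x existential, [override]).  Closure of
   each out^{phi_k} then gives, through [repair], closure of out^phi
   ([upd_closed_conj]); the theorem is a direct assembly. *)

Set Implicit Arguments.
Unset Strict Implicit.
Unset Printing Implicit Defensive.

Section Updates.
Variables (T : finType) (n : nat).
Implicit Types (t : 'I_n -> T) (x j : 'I_n) (c d : T).

Lemma upd_eq t x c : upd t x c x = c.
Proof. by rewrite /upd eqxx. Qed.

Lemma upd_neq t x c j : j != x -> upd t x c j = t j.
Proof. by rewrite /upd => /negbTE ->. Qed.

Lemma upd_twice t x c d : upd (upd t x c) x d = upd t x d.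
Proof. by apply: functional_extensionality => j; rewrite /upd; case: eqP. Qed.

Lemma upd_same t x : upd t x (t x) = t.
Proof. by apply: functional_extensionality => j; rewrite /upd; case: eqP => [->|]. Qed.

Lemma restr_upd_notin (V : {set 'I_n}) t x c :
  x \notin V -> @restr T n V (upd t x c) = @restr T n V t.
Proof.
move=> xNV; apply: functional_extensionality => -[y yV]; rewrite /restr /=.
by rewrite upd_neq //; apply: contraNneq xNV => <-.
Qed.

End Updates.

Section Repair.
Variables (T : finType) (n : nat) (Q : 'I_n -> quant) (D : 'I_n -> {set T}).
Implicit Types (C : seq (constraint n T)) (s : strategy T Q) (t v : 'I_n -> T)
  (P : pred T).

Lemma upd_in_dom t x c : in_dom D t -> c \in D x -> in_dom D (upd t x c).
Proof. by move=> tD cD j; rewrite /upd; case: eqP => [->|]. Qed.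

Lemma sol_sub C c t : List.In c C -> sol D C t -> sol D [:: c] t.
Proof. by move=> cC [tD tC]; split=> // c' [<-|[]]; exact: tC. Qed.

Lemma sol_all C t :
  in_dom D t -> (forall c, List.In c C -> sol D [:: c] t) -> sol D C t.
Proof. by move=> tD tC; split=> // c cC; case: (tC c cC) => _; apply; left. Qed.

Lemma out_sol C t : out Q D C t -> sol D C t.
Proof. by case=> s [_ [sW st]]; exact: sW. Qed.

Lemma out_sub C c t : List.In c C -> out Q D C t -> out Q D [:: c] t.
Proof.
move=> cC [s [sV [sW st]]]; exists s; split=> //; split=> // t' /sW.
exact: sol_sub.
Qed.

Lemma exists_notin_Abefore x j : Q x = QExists -> x \notin Abefore Q j.
Proof. by rewrite /Abefore inE => ->. Qed.

(* Universal x: play as if x had value c whenever x has value b. *)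
Definition redirect s x b c : strategy T Q := fun j h u =>
  s j h (fun y => if (val y == x) && (u y == b) then c else u y).

Lemma redirect_valid s x b c :
  valid_strategy D s -> c \in D x -> valid_strategy D (redirect s x b c).
Proof.
move=> sV cD j h u uD; apply: sV => y.
by case: ifP => [/andP[/eqP ->]|] //.
Qed.

Lemma sce_redirect_hit s x b c t :
  Q x = QForall -> c \in D x -> t x = b ->
  sce D (redirect s x b c) t -> sce D s (upd t x c).
Proof.
move=> Qx cD txb [tD ts]; split; first exact: upd_in_dom.
move=> j h; have jx : j != x by apply: contraPneq h => ->; rewrite Qx.
rewrite upd_neq // ts; congr (s j h); apply: functional_extensionality => y.
by rewrite /restr /upd; case: eqP => [->|]; rewrite ?txb ?eqxx.
Qed.

Lemma sce_redirect_miss s x b c t :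
  t x != b -> sce D (redirect s x b c) t -> sce D s t.
Proof.
move=> txb [tD ts]; split=> // j h; rewrite ts; congr (s j h).
apply: functional_extensionality => y; rewrite /restr.
by case: eqP => [->|] //=; rewrite (negbTE txb).
Qed.

Lemma sce_redirect_upd s x b t :
  Q x = QForall -> b \in D x -> sce D s t ->
  sce D (redirect s x b (t x)) (upd t x b).
Proof.
move=> Qx bD [tD ts]; split; first exact: upd_in_dom.
move=> j h; have jx : j != x by apply: contraPneq h => ->; rewrite Qx.
rewrite upd_neq // ts; congr (s j h); apply: functional_extensionality => y.
by rewrite /restr /upd; case: eqP => [->|]; rewrite ?eqxx.
Qed.

(* Existential x: play b at x whenever s would play a value satisfying P. *)
Definition override s x P b : strategy T Q := fun j h u =>
  if (j == x) && P (s j h u) then b else s j h u.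

Lemma override_valid s x P b :
  valid_strategy D s -> b \in D x -> valid_strategy D (override s x P b).
Proof.
move=> sV bD j h u uD; rewrite /override.
by case: ifP => [/andP[/eqP jx _]|_]; [rewrite jx | exact: sV].
Qed.

Lemma sce_override s x P b t :
  Q x = QExists -> valid_strategy D s -> sce D (override s x P b) t ->
  exists2 v, sce D s v & t = if P (v x) then upd v x b else v.
Proof.
move=> Qx sV [tD ts].
pose v := upd t x (s x Qx (@restr T n (Abefore Q x) t)).
have rv j : @restr T n (Abefore Q j) v = @restr T n (Abefore Q j) t.
  exact/restr_upd_notin/exists_notin_Abefore.
have txP : t x = if P (v x) then b else v x.
  by rewrite {1}(ts x Qx) /override eqxx /v upd_eq.
exists v.
  split=> [|j h]; first by apply: upd_in_dom => //; apply: sV => y; exact: tD.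
  rewrite rv; have [jx|jx] := eqVneq j x.
    by subst j; rewrite /v upd_eq (proof_irrelevance _ h Qx).
  by rewrite /v upd_neq // ts /override (negbTE jx).
apply: functional_extensionality => j; have [->|jx] := eqVneq j x.
  by rewrite txP; case: (P _); rewrite ?upd_eq.
by case: (P _); rewrite /v !upd_neq.
Qed.

Lemma sce_override_upd s x P b t :
  Q x = QExists -> b \in D x -> sce D s t -> P (t x) ->
  sce D (override s x P b) (upd t x b).
Proof.
move=> Qx bD [tD ts] Ptx; split; first exact: upd_in_dom.
move=> j h; rewrite restr_upd_notin ?exists_notin_Abefore // /override.
have [jx|jx] := eqVneq j x; last by rewrite upd_neq // ts.
by subst j; rewrite -ts Ptx upd_eq.
Qed.

Lemma repair C s t x P b :
  valid_strategy D s -> winning D C s -> sce D s t -> b \in D x -> P (t x) ->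
  (forall v, sce D s v -> P (v x) -> sol D C (upd v x b)) ->
  out Q D C (upd t x b).
Proof.
move=> sV sW st bD Ptx repairs; have tD := st.1.
case Qx: (Q x).
- exists (redirect s x b (t x)); split; first exact: redirect_valid.
  split; last exact: sce_redirect_upd.
  move=> t' st'; have [t'xb|t'xb] := eqVneq (t' x) b.
    have := repairs _ (sce_redirect_hit Qx (tD x) t'xb st').
    by rewrite upd_eq upd_twice -t'xb upd_same; apply.
  exact/sW/(sce_redirect_miss t'xb st').
- exists (override s x P b); split; first exact: override_valid.
  split; last exact: sce_override_upd.
  move=> t' /(sce_override Qx sV) [v sv ->].
  by case: ifP => [/(repairs v sv)|_] //; exact: sW.
Qed.

Definition upd_closed C x P b : Prop :=
  forall t, out Q D C t -> P (t x) -> out Q D C (upd t x b).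

Lemma upd_closed_conj C x P b : b \in D x ->
  (forall c, List.In c C -> upd_closed [:: c] x P b) -> upd_closed C x P b.
Proof.
move=> bD closed t [s [sV [sW st]]] Ptx; apply: (repair sV sW st bD Ptx).
move=> v sv Pvx; have vC : out Q D C v by exists s.
apply: sol_all; first exact: upd_in_dom (sv.1) bD.
by move=> c cC; apply/out_sol/(closed c cC v (out_sub cC vC) Pvx).
Qed.

(* d-substitutability of a by b is closure under [pred1 a]; stated on its
   own since d-interchangeability uses it in both directions. *)
Lemma d_substitutable_conj C x a b : b \in D x ->
  (forall c, List.In c C -> d_substitutable Q D [:: c] x a b) ->
  d_substitutable Q D C x a b.
Proof.
move=> bD sub t tC /eqP txa; apply: (upd_closed_conj (P := pred1 a)) => //.
by move=> c cC v vc /eqP; exact: sub.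
Qed.

End Repair.

Theorem proposition14 (T : finType) (n : nat) (Q : 'I_n -> quant)
    (D : 'I_n -> {set T}) (C : seq (constraint n T))
    (x : 'I_n) (V : {set 'I_n}) (a b : T) :
  a \in D x -> b \in D x ->
    ((exists c, List.In c C /\ inconsistent Q D [:: c] x a) ->
        inconsistent Q D C x a) /\
  ((exists c, List.In c C /\ implied Q D [:: c] x a) ->
        implied Q D C x a) /\
  ((forall c, List.In c C -> d_fixable Q D [:: c] x a) ->
        d_fixable Q D C x a) /\
  ((forall c, List.In c C -> d_substitutable Q D [:: c] x a b) ->
        d_substitutable Q D C x a b) /\
  ((forall c, List.In c C -> d_interchangeable Q D [:: c] x a b) ->
        d_interchangeable Q D C x a b) /\
  ((exists c, List.In c C /\ determined Q D [:: c] x) ->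
        determined Q D C x) /\
  ((forall c, List.In c C -> d_irrelevant Q D [:: c] x) ->
        d_irrelevant Q D C x) /\
  ((exists c, List.In c C /\ dependent Q D [:: c] V x) ->
        dependent Q D C V x).
Proof.
move=> aD bD; split; [|split; [|split; [|split; [|split; [|split; [|split]]]]]].
- by move=> [c [cC inc]] t /(out_sub cC); exact: inc.
- by move=> [c [cC imp]] t /(out_sub cC); exact: imp.
- move=> fix_c t tC; apply: (upd_closed_conj (P := predT)) => //.
  by move=> c cC v vc _; exact: fix_c.
- exact: d_substitutable_conj.
- by move=> ich; split; apply: d_substitutable_conj => // c /ich [].
- move=> [c [cC det]] t tC b' b'D b'N /(out_sub cC).
  exact: det (out_sub cC tC) b' b'D b'N.
- move=> irr t tC b' b'D; apply: (upd_closed_conj (P := predT)) => //.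
  by move=> c cC v vc _; exact: irr.
- by move=> [c [cC dep]] t t' /(out_sub cC) tc /(out_sub cC); exact: dep.
Qed.
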